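(* Let $G$ be a connected graph. If $\sigma_2(G)\ge 2\widetilde{\alpha}(G)-2$, then $G$ is traceable (i.e., $G$ contains a path through every vertex).
   Context: All graphs are finite and simple. For a graph $G$ that is not complete, $\sigma_2(G)=\min\{d_G(u)+d_G(v): u,v\in V(G),\ u\ne v,\ uv\notin E(G)\}$; if $G$ is complete, $\sigma_2(G)=\infty$. An $(s,t)$-bipartite-hole in $G$ consists of two disjoint vertex sets $S,T\subseteq V(G)$ with $|S|=s$, $|T|=t$ and no edge of $G$ having one endpoint in $S$ and the other in $T$. The bipartite-hole-number $\widetilde{\alpha}(G)$ is the minimum integer $k$ such that there exist positive integers $s,t$ with $s+t=k+1$ for which $G$ contains no $(s,t)$-bipartite-hole. *)

(* A finite simple graph is a symmetric irreflexive
   relation e on a finite type V. *)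
From mathcomp Require Import all_boot.
Set Implicit Arguments. Unset Strict Implicit. Unset Printing Implicit Defensive.

Section Graph.
Variables (V : finType) (e : rel V).

Definition deg (v : V) : nat := #|[set u | e v u]|.

Definition complete : bool := [forall u, forall v, (u != v) ==> e u v].

(* sigma_2 with values in nat + {infinity}; None stands for infinity
   (the complete case). *)
Definition sigma2 : option nat :=
  if complete then None
  else Some (\big[minn/#|V|.*2]_(u | true) \big[minn/#|V|.*2]_(v | (u != v) && ~~ e u v)
               (deg u + deg v)).

Definition le_ext (k : nat) (o : option nat) : bool :=
  if o is Some s then k <= s else true.

Definition has_bhole (s t : nat) : bool :=
  [exists S : {set V}, exists T : {set V},
     [&& #|S| == s, #|T| == t, [disjoint S & T] &
         [forall x in S, forall y in T, ~~ e x y]]].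

Definition bhole_free (k : nat) : bool :=
  [exists s : 'I_k.+2, [&& 0 < (s : nat), (s : nat) <= k & ~~ has_bhole s (k.+1 - s)]].

Lemma bhole_free_exists : exists k, bhole_free k.
Proof.
exists #|V|.+1; apply/existsP.
have lt1 : 1 < #|V|.+3 by [].
exists (Ordinal lt1) => /=; rewrite /= subSS subn0.
apply/negP => /existsP [S] /existsP [T] /and4P [_ /eqP cT _ _].
by have := max_card T; rewrite cT ltnn.
Qed.

Definition bhn : nat := ex_minn bhole_free_exists.

Definition connected : Prop := forall x y : V, connect e x y.

Definition traceable : Prop :=
  exists s : seq V, [/\ uniq s, sorted e s & forall v : V, v \in s].

End Graph.

(* Let k be the bipartite-hole number and argue by induction on the number of
   non-edges.  If two non-adjacent vertices u, v both have degree at least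
   k - 1, then G + uv still satisfies the hypothesis (degrees do not drop and
   the bipartite-hole number does not grow), so it has a Hamiltonian path.  If
   G has none, that path uses uv; joining its two halves through an apex
   adjacent to everything gives a Hamiltonian path from u to v in the cone over
   G, whose ends have degree at least k, while the cone has no Hamiltonian
   cycle.  Posa rotations of this path then yield an (s, k + 1 - s)-hole of the
   cone; it avoids the apex, so it is a hole of G, contradicting the choice of
   k.  Otherwise the vertices of degree less than k - 1 form a clique, and so
   do the others, and a connected graph covered by two cliques is traceable. *)

From HB Require Import structures.
From mathcomp Require Import all_boot zify.
From Stdlib Require Import Classical.
Set Implicit Arguments. Unset Strict Implicit. Unset Printing Implicit Defensive.

(* [\big[minn/d]] has no neutral element, so only the semigroup laws of [minn] apply. *)
HB.instance Definition _ := SemiGroup.isComLaw.Build nat minn minnA minnC.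

Lemma bigmin_leq (I : finType) (P : pred I) (F : I -> nat) d j :
  P j -> \big[minn/d]_(i | P i) F i <= F j.
Proof. by move=> Pj; rewrite (big_rem_AC minn d _ _ (mem_index_enum j)) Pj geq_minl. Qed.

Lemma leq_bigmin (I : finType) (P : pred I) (F : I -> nat) d k :
  k <= d -> (forall i, P i -> k <= F i) -> k <= \big[minn/d]_(i | P i) F i.
Proof. by move=> kd kF; elim/big_ind: _ => // m n; rewrite leq_min => -> ->. Qed.

Lemma subset_of_card (T : finType) (B : {set T}) k :
  k <= #|B| -> exists2 A : {set T}, A \subset B & #|A| = k.
Proof.
move=> le_kB; have : 0 < #|[set A : {set T} | A \subset B & #|A| == k]|.
  by rewrite cards_draws bin_gt0.
by case/card_gt0P => A; rewrite inE => /andP [sAB /eqP cA]; exists A.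
Qed.

Section CatPaths.
Variables (T : Type) (x0 : T) (r : rel T).

Lemma head_cat p q : 0 < size p -> head x0 (p ++ q) = head x0 p.
Proof. by case: p. Qed.

Lemma last_cat_nonempty x p q : 0 < size q -> last x (p ++ q) = last x0 q.
Proof. by case: q => // y q _; rewrite last_cat. Qed.

Lemma head_rev p : head x0 (rev p) = last x0 p.
Proof. by case/lastP: p => // p y; rewrite rev_rcons last_rcons. Qed.

Lemma last_rev p : last x0 (rev p) = head x0 p.
Proof. by case: p => // y p; rewrite rev_cons last_rcons. Qed.

Lemma sorted_catE p q : 0 < size p -> 0 < size q ->
  sorted r (p ++ q) = [&& sorted r p, r (last x0 p) (head x0 q) & sorted r q].
Proof. by case: p => // y p _; case: q => // z q _; rewrite /= cat_path /= andbA. Qed.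

Lemma cycleE c : 0 < size c -> cycle r c = sorted r c && r (last x0 c) (head x0 c).
Proof. by case: c => // y c _; rewrite /= rcons_path. Qed.

Hypothesis r_sym : symmetric r.

Lemma sorted_rev p : sorted r (rev p) = sorted r p.
Proof. by rewrite rev_sorted; apply: eq_sorted => y z; rewrite r_sym. Qed.

Lemma cycle_rev_cat p q : 0 < size p -> 0 < size q -> sorted r (p ++ q) ->
  r (head x0 p) (head x0 q) -> r (last x0 p) (last x0 q) -> cycle r (rev p ++ q).
Proof.
move=> p0 q0; rewrite sorted_catE // => /and3P [sp _ sq] hh ll.
have rp0 : 0 < size (rev p) by rewrite size_rev.
rewrite cycleE ?size_cat ?addn_gt0 ?q0 ?orbT // sorted_catE // sorted_rev.
by rewrite last_rev head_cat // last_cat_nonempty // head_rev sp sq hh r_sym ll.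
Qed.

Lemma cycle_rev_cat3 p q t : 0 < size p -> 0 < size q -> 0 < size t ->
  sorted r (p ++ q ++ t) -> r (head x0 p) (head x0 q) ->
  r (last x0 q) (last x0 t) -> r (head x0 t) (last x0 p) ->
  cycle r (rev p ++ q ++ rev t).
Proof.
move=> p0 q0 t0; rewrite !sorted_catE ?size_cat ?addn_gt0 ?q0 //.
rewrite head_cat // => /and4P [sp _ sq /andP [_ st]] hh ll hl.
have [rp0 rt0] : 0 < size (rev p) /\ 0 < size (rev t) by rewrite !size_rev.
rewrite cycleE ?size_cat ?addn_gt0 ?q0 ?orbT //.
rewrite !sorted_catE ?size_cat ?addn_gt0 ?q0 // !sorted_rev sp sq st.
rewrite head_cat // last_rev head_rev !last_cat_nonempty ?size_cat ?addn_gt0 ?rt0 ?orbT //.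
by rewrite head_cat // head_rev last_rev hh ll hl.
Qed.

Lemma cycle_cat_rev3 p q t : 0 < size p -> 0 < size q -> 0 < size t ->
  sorted r (p ++ q ++ t) -> r (last x0 p) (last x0 q) ->
  r (head x0 q) (last x0 t) -> r (head x0 t) (head x0 p) ->
  cycle r (p ++ rev q ++ rev t).
Proof.
move=> p0 q0 t0; rewrite !sorted_catE ?size_cat ?addn_gt0 ?q0 //.
rewrite head_cat // => /and4P [sp _ sq /andP [_ st]] ll hl hh.
have [rq0 rt0] : 0 < size (rev q) /\ 0 < size (rev t) by rewrite !size_rev.
rewrite cycleE ?size_cat ?addn_gt0 ?p0 //.
rewrite !sorted_catE ?size_cat ?addn_gt0 ?rq0 // !sorted_rev sp sq st.
rewrite head_cat // head_rev last_rev !last_cat_nonempty ?size_cat ?addn_gt0 ?rt0 ?orbT //.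
by rewrite head_cat // head_rev last_rev ll hl hh.
Qed.

End CatPaths.

Section Slices.
Variables (T : Type) (x0 : T) (s : seq T).

Definition slice a b := take (b - a) (drop a s).

Lemma size_slice a b : b <= size s -> size (slice a b) = b - a.
Proof. by move=> bs; rewrite size_takel // size_drop; lia. Qed.

Lemma nth_slice a b i : i < b - a -> nth x0 (slice a b) i = nth x0 s (a + i).
Proof. by move=> ib; rewrite nth_take // nth_drop. Qed.

Lemma head_slice a b : a < b -> head x0 (slice a b) = nth x0 s a.
Proof. by move=> ab; rewrite -nth0 nth_slice ?addn0 ?subn_gt0. Qed.

Lemma last_slice a b : a < b <= size s -> last x0 (slice a b) = nth x0 s b.-1.
Proof.
by case/andP=> ab bs; rewrite -nth_last size_slice // nth_slice; [congr nth; lia | lia].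
Qed.

Lemma cat_slice a b c : a <= b <= c -> slice a b ++ slice b c = slice a c.
Proof.
case/andP=> ab bc; have cE : c - a = (b - a) + (c - b) by lia.
by rewrite /slice [in RHS]cE takeD drop_drop subnK.
Qed.

Lemma slice_full : slice 0 (size s) = s.
Proof. by rewrite /slice drop0 subn0 take_size. Qed.

End Slices.

Section GraphInvariants.
Variables (V : finType) (e : rel V).

Lemma le_sigma2P k : le_ext k (sigma2 e) <->
  (forall u v, u != v -> ~~ e u v -> k <= deg e u + deg e v).
Proof.
rewrite /le_ext /sigma2; case: ifPn => [/forallP e_complete | /forallPn [u /forallPn [v]]].
  by split=> // _ u v uv; have /forallP /(_ v) /implyP /(_ uv) -> := e_complete u.
rewrite negb_imply => /andP [uv nuv]; split => [le_k x y xy nxy | le_k].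
  apply: (leq_trans le_k); apply: leq_trans (bigmin_leq _ _ (j := x) isT) _.
  by apply: bigmin_leq; rewrite xy nxy.
have le_k2 : k <= #|V|.*2.
  by apply: leq_trans (le_k u v uv nuv) _; rewrite -addnn leq_add ?max_card.
apply: leq_bigmin => // x _; apply: leq_bigmin => // y /andP [xy nxy].
exact: le_k.
Qed.

Lemma has_bholeP s t : reflect (exists S T : {set V}, [/\ #|S| = s, #|T| = t,
    [disjoint S & T] & {in S & T, forall x y, ~~ e x y}]) (has_bhole e s t).
Proof.
apply: (iffP existsP) => [[S /existsP [T /and4P [/eqP cS /eqP cT dST /forallP noE]]]
                         | [S [T [cS cT dST noE]]]].
  exists S, T; split=> // x y xS yT.
  by have /forallP /(_ y) := implyP (noE x) xS; rewrite yT.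
exists S; apply/existsP; exists T; rewrite cS cT !eqxx dST /=.
by apply/forall_inP => x xS; apply/forall_inP => y yT; apply: noE.
Qed.

Lemma has_bhole_leq (S T : {set V}) s t :
  [disjoint S & T] -> {in S & T, forall x y, ~~ e x y} ->
  s <= #|S| -> t <= #|T| -> has_bhole e s t.
Proof.
move=> dST noE /subset_of_card [S' sS' cS'] /subset_of_card [T' sT' cT'].
apply/has_bholeP; exists S', T'; split=> //.
  exact: disjointWl sS' (disjointWr sT' dST).
by move=> x y xS' yT'; apply: noE; [apply: (subsetP sS') | apply: (subsetP sT')].
Qed.

Lemma bhn_hole_free : exists s, [/\ 0 < s, s <= bhn e & ~~ has_bhole e s ((bhn e).+1 - s)].
Proof.
by rewrite /bhn; case: ex_minnP => k /existsP [s /and3P [s_gt0 s_le noH]] _; exists s.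
Qed.

End GraphInvariants.

Lemma bhn_subrel (V : finType) (e e' : rel V) : subrel e e' -> bhn e' <= bhn e.
Proof.
move=> sub; rewrite [bhn e]/bhn; case: ex_minnP => k /existsP [s /and3P [s_gt0 s_le noH]] _.
rewrite /bhn; case: ex_minnP => k' _ min_k'; apply: min_k'; apply/existsP; exists s.
rewrite s_gt0 s_le; apply: contra noH => /has_bholeP [S [T [cS cT dST noE]]].
apply/has_bholeP; exists S, T; split=> // x y xS yT.
by apply: contra (noE x y xS yT); apply: sub.
Qed.

Section Cone.
Variables (V : finType) (e : rel V).

(* The apex [None] is adjacent to every vertex, so a Hamiltonian cycle of the
   cone is a Hamiltonian path of [e] closed up through the apex. *)
Definition cone : rel (option V) := fun a b =>
  match a, b with
  | Some x, Some y => e x y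
  | None, None => false
  | _, _ => true
  end.

Lemma cone_sym : symmetric e -> symmetric cone.
Proof. by move=> e_sym [x|] [y|] //=; rewrite e_sym. Qed.

Lemma cone_irr : irreflexive e -> irreflexive cone.
Proof. by move=> e_irr [x|] //=; rewrite e_irr. Qed.

Lemma card_option_set (X : {set option V}) : #|X| = (None \in X) + #|[set v | Some v \in X]|.
Proof.
rewrite (cardsD1 None); congr (_ + _).
rewrite -[#|[set v | _]|](card_imset _ Some_inj).
apply: eq_card => -[v|]; rewrite !inE ?(mem_imset _ _ Some_inj) ?inE //=.
by symmetry; apply/negbTE/imsetP => -[x _].
Qed.

Lemma deg_cone u : deg cone (Some u) = (deg e u).+1.
Proof. by rewrite /deg card_option_set inE add1n; congr _.+1; apply: eq_card => v; rewrite !inE. Qed.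

Lemma map_Some_pmap (t : seq (option V)) : None \notin t -> map Some (pmap id t) = t.
Proof. by elim: t => [|[y|] t IH] //=; rewrite inE negb_or => /andP [_ /IH ->]. Qed.

Lemma sorted_cone p q : sorted e p -> sorted e q ->
  sorted cone (map Some p ++ None :: map Some q).
Proof.
move=> sp sq; rewrite sorted_cat_cons; apply/andP; split.
  by case: p sp => //= x p; rewrite rcons_path path_map last_map => ->.
by case: q sq => //= y q; rewrite path_map.
Qed.

Lemma cone_cycle_traceable c : uniq c -> (forall a, a \in c) -> cycle cone c ->
  traceable e.
Proof.
move=> c_uniq c_all c_cycle; case: (rot_to (c_all None)) => i t rotE.
have := c_uniq; rewrite -(rot_uniq i) rotE /= => /andP [None_t t_uniq].
have : cycle cone (None :: t) by rewrite -rotE rot_cycle.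
rewrite /= rcons_path => /andP [/path_sorted t_sorted _].
have tE := map_Some_pmap None_t.
exists (pmap id t); split.
- by rewrite -(map_inj_uniq Some_inj) tE.
- by move: t_sorted; rewrite -{1}tE sorted_map; apply.
- move=> v; have := c_all (Some v); rewrite -(mem_rot i) rotE inE /=.
  by rewrite -{1}tE (mem_map Some_inj).
Qed.

Lemma has_bhole_cone s t : 0 < s -> 0 < t -> has_bhole cone s t -> has_bhole e s t.
Proof.
move=> s_gt0 t_gt0 /has_bholeP [S [T [cS cT dST noE]]].
have notin_S : None \notin S.
  apply/negP => NS; have /card_gt0P [y yT] : 0 < #|T| by rewrite cT.
  by have := noE _ _ NS yT; case: y yT => // yT; rewrite (disjointFr dST NS) in yT.
have notin_T : None \notin T.
  apply/negP => NT; have /card_gt0P [y yS] : 0 < #|S| by rewrite cS.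
  by have := noE _ _ yS NT; case: y yS => // yS; rewrite (disjointFl dST NT) in yS.
apply: (has_bhole_leq (S := [set v | Some v \in S]) (T := [set v | Some v \in T])).
- apply/pred0P => v /=; rewrite !inE; apply/negbTE/andP => -[vS vT].
  by rewrite (disjointFr dST vS) in vT.
- by move=> x y; rewrite !inE; apply: noE.
- by rewrite -cS card_option_set (negbTE notin_S).
- by rewrite -cT card_option_set (negbTE notin_T).
Qed.

End Cone.

Section PathRotations.
Variables (W : finType) (r : rel W) (w0 : W) (s : seq W).
Hypotheses (r_sym : symmetric r) (r_irr : irreflexive r).
Hypotheses (s_uniq : uniq s) (s_sorted : sorted r s) (s_all : forall w, w \in s).
Hypothesis s_no_cycle : forall c, perm_eq c s -> ~~ cycle r c.
Hypothesis ends_nonadjacent : ~~ r (head w0 s) (last w0 s).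

Local Notation N := (size s).
Local Notation x i := (nth w0 s i).

(* No rearrangement of [s] is a Hamiltonian cycle; each crossing lemma below
   exhibits the Hamiltonian cycle that the forbidden edge would close. *)

Let not_cycle_rev_cat p q : s = p ++ q -> ~~ cycle r (rev p ++ q).
Proof. by move=> sE; apply: s_no_cycle; rewrite sE perm_cat2r perm_rev. Qed.

Let not_cycle_rev_cat3 p q t : s = p ++ q ++ t -> ~~ cycle r (rev p ++ q ++ rev t).
Proof.
by move=> sE; apply: s_no_cycle; rewrite sE; apply: perm_cat; rewrite ?perm_rev //;
  apply: perm_cat; rewrite ?perm_rev.
Qed.

Let not_cycle_cat_rev3 p q t : s = p ++ q ++ t -> ~~ cycle r (p ++ rev q ++ rev t).
Proof.
by move=> sE; apply: s_no_cycle; rewrite sE; apply: perm_cat => //;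
  apply: perm_cat; rewrite perm_rev.
Qed.

Lemma no_crossing i : 0 < i < N -> r (x 0) (x i) -> ~~ r (x i.-1) (x N.-1).
Proof.
move=> i_range r0i; apply/negP => rlast.
have sE : s = slice s 0 i ++ slice s i N by rewrite cat_slice ?slice_full //; lia.
apply: (negP (not_cycle_rev_cat sE)); apply: (cycle_rev_cat (x0 := w0) r_sym) => //.
- by rewrite size_slice; lia.
- by rewrite size_slice; lia.
- by rewrite -sE.
- by rewrite !head_slice //; lia.
- by rewrite !last_slice //; lia.
Qed.

Lemma no_nested_crossing i j : 0 < i <= j -> j.+1 < N ->
  r (x 0) (x i) -> r (x j) (x N.-1) -> ~~ r (x i.-1) (x j.+1).
Proof.
move=> ij jN r0i rjN; apply/negP => rij.
have sE : s = slice s 0 i ++ slice s i j.+1 ++ slice s j.+1 N.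
  by rewrite cat_slice ?cat_slice ?slice_full //; lia.
apply: (negP (not_cycle_rev_cat3 sE)); apply: (cycle_rev_cat3 (x0 := w0) r_sym) => //.
- by rewrite size_slice; lia.
- by rewrite size_slice; lia.
- by rewrite size_slice; lia.
- by rewrite -sE.
- by rewrite !head_slice //; lia.
- by rewrite !last_slice //; lia.
- by rewrite r_sym head_slice ?last_slice //; lia.
Qed.

Lemma no_disjoint_crossing i j : 0 < j < i -> i < N ->
  r (x 0) (x i) -> r (x j) (x N.-1) -> ~~ r (x j.-1) (x i.-1).
Proof.
move=> ji iN r0i rjN; apply/negP => rji.
have sE : s = slice s 0 j ++ slice s j i ++ slice s i N.
  by rewrite cat_slice ?cat_slice ?slice_full //; lia.
apply: (negP (not_cycle_cat_rev3 sE)); apply: (cycle_cat_rev3 (x0 := w0) r_sym) => //.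
- by rewrite size_slice; lia.
- by rewrite size_slice; lia.
- by rewrite size_slice; lia.
- by rewrite -sE.
- by rewrite !last_slice //; lia.
- by rewrite head_slice ?last_slice //; lia.
- by rewrite r_sym !head_slice //; lia.
Qed.

Local Notation idx y := (index y s).

Let nth_idx y : x (idx y) = y.
Proof. exact: nth_index. Qed.

Let idx_lt y : idx y < N.
Proof. by rewrite index_mem. Qed.

Let nth_inj i j : i < N -> j < N -> x i = x j -> i = j.
Proof. by move=> iN jN /eqP; rewrite nth_uniq // => /eqP. Qed.

Local Notation A := ([set y | r (head w0 s) y]).
Local Notation B := ([set y | r (last w0 s) y]).

Let idx_inner y : idx y != 0 -> idx y != N.-1 -> 0 < idx y < N.-1.
Proof. by have := idx_lt y; lia. Qed.

Let idx_A y : y \in A -> 0 < idx y < N.-1.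
Proof.
rewrite inE => r0y; apply: idx_inner; apply/eqP => iE; move: r0y.
  by rewrite -(nth_idx y) iE nth0 r_irr.
by rewrite -(nth_idx y) iE nth_last (negbTE ends_nonadjacent).
Qed.

Let idx_B y : y \in B -> 0 < idx y < N.-1.
Proof.
rewrite inE => rNy; apply: idx_inner; apply/eqP => iE; move: rNy.
  by rewrite -(nth_idx y) iE nth0 r_sym (negbTE ends_nonadjacent).
by rewrite -(nth_idx y) iE nth_last r_irr.
Qed.

Let card_shift (P : {set W}) (d : nat -> nat) :
  {in P &, forall y z, d (idx y) = d (idx z) -> y = z} ->
  {in P, forall y, d (idx y) < N} -> #|[set x (d (idx y)) | y in P]| = #|P|.
Proof.
move=> d_inj d_lt; apply: card_in_imset => y z yP zP /nth_inj eq_yz.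
exact: d_inj (eq_yz (d_lt y yP) (d_lt z zP)).
Qed.

Local Notation before m := ([set y | idx y < m]).

Variables (s0 t0 : nat).
Hypotheses (s0_gt0 : 0 < s0) (t0_gt0 : 0 < t0).
Hypotheses (deg_head : s0 + t0 <= #|A|.+1) (deg_last : s0 + t0 <= #|B|.+1).

Let hole_pred_pred m : s0 <= #|A :\: before m| -> t0 <= #|B :&: before m|.+1 ->
  has_bhole r s0 t0.
Proof.
move=> le_s0 le_t0.
have S_idx y : y \in A :\: before m ->
    [/\ 0 < idx y < N.-1, m <= idx y & r (x 0) (x (idx y))].
  rewrite !inE -leqNgt => /andP [my yA]; split=> //; last by rewrite nth0 nth_idx.
  by apply: idx_A; rewrite inE.
have T_idx z : z \in B :&: before m ->
    [/\ 0 < idx z < N.-1, idx z < m & r (x (idx z)) (x N.-1)].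
  rewrite !inE => /andP [zB zm]; split=> //; last by rewrite nth_last nth_idx r_sym.
  by apply: idx_B; rewrite inE.
pose S := [set x (idx y).-1 | y in A :\: before m].
pose T := [set x (idx z).-1 | z in B :&: before m].
have card_S : #|S| = #|A :\: before m|.
  apply: card_shift => [y z /S_idx [yr _ _] /S_idx [zr _ _] yz | y /S_idx [yr _ _]]; last lia.
  by rewrite -[y]nth_idx -[z]nth_idx; congr nth; lia.
have card_T : #|T| = #|B :&: before m|.
  apply: card_shift => [y z /T_idx [yr _ _] /T_idx [zr _ _] yz | y /T_idx [yr _ _]]; last lia.
  by rewrite -[y]nth_idx -[z]nth_idx; congr nth; lia.
have last_notin_T : x N.-1 \notin T.
  by apply/imsetP => [[z /T_idx [zr _ _] /nth_inj]]; lia.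
apply: (has_bhole_leq (S := S) (T := x N.-1 |: T)); last 2 first.
- by rewrite card_S.
- by rewrite cardsU1 last_notin_T card_T.
- apply/pred0P => w /=; apply/negbTE/andP => -[/imsetP [y /S_idx [yr ym _] ->]].
  by case/setU1P => [| /imsetP [z /T_idx [zr zm _]]] /nth_inj; lia.
move=> w w' /imsetP [y /S_idx [yr ym Ay] ->] /setU1P [-> | /imsetP [z /T_idx [zr zm Bz] ->]].
  by apply: no_crossing => //; lia.
by rewrite r_sym; apply: no_disjoint_crossing => //; lia.
Qed.

Let hole_pred_succ m : #|A :\: before m.+1| < s0 -> #|B :&: before m| < t0.-1 ->
  has_bhole r s0 t0.
Proof.
move=> lt_s0 lt_t0.
have S_idx y : y \in A :&: before m.+1 ->
    [/\ 0 < idx y < N.-1, idx y <= m & r (x 0) (x (idx y))].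
  rewrite !inE ltnS => /andP [yA ym]; split=> //; last by rewrite nth0 nth_idx.
  by apply: idx_A; rewrite inE.
have T_idx z : z \in B :\: before m ->
    [/\ 0 < idx z < N.-1, m <= idx z & r (x (idx z)) (x N.-1)].
  rewrite !inE -leqNgt => /andP [mz zB]; split=> //; last by rewrite nth_last nth_idx r_sym.
  by apply: idx_B; rewrite inE.
pose S := [set x (idx y).-1 | y in A :&: before m.+1].
pose T := [set x (idx z).+1 | z in B :\: before m].
have card_S : #|S| = #|A :&: before m.+1|.
  apply: card_shift => [y z /S_idx [yr _ _] /S_idx [zr _ _] yz | y /S_idx [yr _ _]]; last lia.
  by rewrite -[y]nth_idx -[z]nth_idx; congr nth; lia.
have card_T : #|T| = #|B :\: before m|.
  apply: card_shift => [y z /T_idx [yr _ _] /T_idx [zr _ _] yz | y /T_idx [yr _ _]]; last lia.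
  by rewrite -[y]nth_idx -[z]nth_idx; congr nth; lia.
have card_A := cardsID (before m.+1) A; have card_B := cardsID (before m) B.
apply: (has_bhole_leq (S := T) (T := S)); last 2 first.
- by rewrite card_T; lia.
- by rewrite card_S; lia.
- apply/pred0P => w /=; apply/negbTE/andP => -[/imsetP [z /T_idx [zr zm _] ->]].
  by case/imsetP => [y /S_idx [yr ym _] /nth_inj]; lia.
move=> w w' /imsetP [z /T_idx [zr zm Bz] ->] /imsetP [y /S_idx [yr ym Ay] ->].
by rewrite r_sym; apply: no_nested_crossing => //; lia.
Qed.

(* Take the last cut m with at least s0 neighbours of the head at or after
   it.  If at least t0 - 1 neighbours of the tail lie before m, their
   predecessors and the tail face the predecessors of the late neighbours of
   the head; otherwise the predecessors of the early neighbours of the head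
   face the successors of the late neighbours of the tail. *)
Lemma has_bhole_of_path : has_bhole r s0 t0.
Proof.
have ex_m : exists m, s0 <= #|A :\: before m|.
  exists 0; rewrite (_ : before 0 = set0) ?setD0; first lia.
  by apply/setP => y; rewrite !inE.
have bound m : s0 <= #|A :\: before m| -> m <= N.
  move=> s0_le; have /card_gt0P [y] := leq_trans s0_gt0 s0_le.
  by rewrite !inE -leqNgt => /andP [my _]; apply: leq_trans my (ltnW (idx_lt y)).
case: (ex_maxnP ex_m bound) => m s0_le max_m.
have lt_s0 : #|A :\: before m.+1| < s0 by rewrite ltnNge; apply/negP => /max_m; lia.
case: (leqP t0.-1 #|B :&: before m|) => gB.
  by apply: (hole_pred_pred s0_le); lia.
exact: hole_pred_succ lt_s0 gB.
Qed.

End PathRotations.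

Section AddEdge.
Variables (V : finType) (e : rel V) (u v : V).

Definition add_edge : rel V :=
  fun a b => e a b || (a == u) && (b == v) || (a == v) && (b == u).

Lemma subrel_add_edge : subrel e add_edge.
Proof. by move=> a b eab; rewrite /add_edge eab. Qed.

Lemma add_edge_sym : symmetric e -> symmetric add_edge.
Proof.
move=> e_sym a b; rewrite /add_edge e_sym -!orbA; congr (_ || _).
by rewrite orbC [(b == u) && _]andbC [(b == v) && _]andbC.
Qed.

Lemma add_edge_irr : irreflexive e -> u != v -> irreflexive add_edge.
Proof.
move=> e_irr uv a; rewrite /add_edge e_irr /=.
by case: eqP => [->|_]; rewrite ?(negbTE uv) ?andbF //=; case: eqP => [->|]; rewrite ?eq_sym ?(negbTE uv).
Qed.

Lemma connected_add_edge : connected e -> connected add_edge.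
Proof. by move=> conn a b; apply: connect_sub (conn a b) => x y /subrel_add_edge /connect1. Qed.

Lemma deg_add_edge a : deg e a <= deg add_edge a.
Proof. by apply: subset_leq_card; apply/subsetP => b; rewrite !inE => /subrel_add_edge. Qed.

Definition nonedges (r : rel V) := [set p : V * V | (p.1 != p.2) && ~~ r p.1 p.2].

Lemma nonedges_add_edge : u != v -> ~~ e u v ->
  #|nonedges add_edge| < #|nonedges e|.
Proof.
move=> uv nuv; apply: proper_card; apply/properP; split.
  apply/subsetP => -[a b]; rewrite !inE /= => /andP [-> /=].
  by apply: contra => /subrel_add_edge.
by exists (u, v); rewrite !inE /= uv ?nuv // /add_edge !eqxx orbT.
Qed.

Lemma split_add_edge_path c : uniq c -> sorted add_edge c ->
  sorted e c \/ exists p1 a b p2, [/\ c = rcons p1 a ++ b :: p2,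
    sorted e (rcons p1 a), sorted e (b :: p2) &
    (a == u) && (b == v) || (a == v) && (b == u)].
Proof.
case: c => [|x c]; first by left.
elim: c x => [|y c IH] x; first by left.
rewrite [uniq _]/= [sorted _ _]/= => /andP [x_notin yc_uniq] /andP [x_y yc_path].
have [exy | nexy] := boolP (e x y).
  case: (IH y yc_uniq yc_path) => [yc_sorted | [p1 [a [b [p2 [ycE s1 s2 ab]]]]]].
    by left; rewrite /= exy.
  right; exists (x :: p1), a, b, p2; split=> //; first by rewrite ycE.
  by case: p1 ycE s1 => [|z p1] [<- _] /=; rewrite exy.
have x_new : (x == u) && (y == v) || (x == v) && (y == u).
  by move: x_y; rewrite /add_edge (negbTE nexy).
right; exists [::], x, y, c; split=> //.
case: (IH y yc_uniq yc_path) => // [[p1 [a [b [p2 [ycE _ _ ab]]]]]].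
have a_in : a \in y :: c by rewrite ycE mem_cat mem_rcons mem_head.
have b_in : b \in y :: c by rewrite ycE mem_cat mem_head orbT.
have /andP [u_in v_in] : (u \in y :: c) && (v \in y :: c).
  by case/orP: ab => /andP [/eqP <- /eqP <-]; rewrite a_in b_in.
by case/orP: x_new x_notin => /andP [/eqP -> _]; rewrite ?u_in ?v_in.
Qed.

End AddEdge.

Section TwoCliques.
Variables (V : finType) (e : rel V).

Definition clique (A : {set V}) := {in A &, forall a b, a != b -> e a b}.

Lemma clique_sorted A s : clique A -> uniq s -> {subset s <= A} -> sorted e s.
Proof.
move=> cA; elim: s => //= x s IH /andP [x_notin s_uniq] sA.
have sA' : {subset s <= A} by move=> y ys; apply: sA; rewrite inE ys orbT.
rewrite path_min_sorted ?IH //; apply/allP => y ys.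
by apply: cA; [apply: sA; rewrite mem_head | apply: sA' | apply: contraNneq x_notin => ->].
Qed.

Lemma traceable_clique A : clique A -> (forall a, a \in A) -> traceable e.
Proof.
move=> cA allA; exists (enum V); split=> [||a]; rewrite ?enum_uniq ?mem_enum //.
by apply: clique_sorted cA (enum_uniq _) _ => a _; apply: allA.
Qed.

Lemma traceable_cross_edge L l c : clique L -> clique (~: L) ->
  l \in L -> c \notin L -> e l c -> traceable e.
Proof.
move=> cL cR lL cL' elc.
pose p1 := [seq w <- enum V | (w \in L) && (w != l)].
pose p2 := [seq w <- enum V | (w \notin L) && (w != c)].
have mem1 w : w \in rcons p1 l = (w \in L).
  by rewrite mem_rcons inE mem_filter mem_enum andbT; case: eqVneq => [->|] //=; rewrite andbT.
have mem2 w : w \in c :: p2 = (w \notin L).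
  by rewrite inE mem_filter mem_enum andbT; case: eqVneq => [->|] //=; rewrite andbT.
have uniq1 : uniq (rcons p1 l).
  by rewrite rcons_uniq mem_filter eqxx andbF filter_uniq ?enum_uniq.
have uniq2 : uniq (c :: p2) by rewrite /= mem_filter eqxx andbF filter_uniq ?enum_uniq.
exists (rcons p1 l ++ c :: p2); split.
- rewrite cat_uniq uniq1 uniq2 andbT; apply/hasPn => w.
  by rewrite mem2 mem1.
- have s1 : sorted e (rcons p1 l) by apply: clique_sorted cL uniq1 _ => w; rewrite mem1.
  have s2 : sorted e (c :: p2) by apply: clique_sorted cR uniq2 _ => w; rewrite mem2 inE.
  by rewrite (sorted_catE l) ?size_rcons // last_rcons s1 s2 /= elc.
- by move=> w; rewrite mem_cat mem1 mem2 orbN.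
Qed.

Lemma connect_cross_edge (L : {set V}) x y : connect e x y -> x \in L -> y \notin L ->
  exists l c, [/\ l \in L, c \notin L & e l c].
Proof.
case/connectP => p; elim: p x => [|z p IH] x /=; first by move=> _ -> ->.
case/andP => exz zp y_last xL yL; have [zL | zL] := boolP (z \in L).
  exact: IH zp y_last zL yL.
by exists x, z.
Qed.

Lemma traceable_two_cliques L : connected e -> clique L -> clique (~: L) -> traceable e.
Proof.
move=> conn cL cR.
have [l lL | L0] := pickP (mem L); last first.
  by apply: traceable_clique cR _ => a; rewrite inE; apply/negbT/L0.
have [c cL' | R0] := pickP [predC L]; last first.
  by apply: traceable_clique cL _ => a; apply/negbFE/R0.
have [l' [c' [l'L c'L' el'c']]] := connect_cross_edge (conn l c) lL cL'.
exact: traceable_cross_edge cL cR l'L c'L' el'c'.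
Qed.

End TwoCliques.

Section Closure.
Variables (V : finType) (e : rel V).
Hypotheses (e_sym : symmetric e) (e_irr : irreflexive e).

Lemma cone_path_of_split c p1 a b p2 : uniq c -> (forall w, w \in c) ->
  c = rcons p1 a ++ b :: p2 -> sorted e (rcons p1 a) -> sorted e (b :: p2) ->
  exists q, [/\ uniq q, sorted (cone e) q, (forall w, w \in q),
                head None q = Some b & last None q = Some a].
Proof.
move=> c_uniq c_all cE s1 s2.
exists (map Some (b :: p2) ++ None :: map Some (rcons p1 a)).
have q_perm : perm_eq (map Some (b :: p2) ++ None :: map Some (rcons p1 a))
                      (None :: map Some c).
  by rewrite cE map_cat perm_catC.
split.
- rewrite (perm_uniq q_perm) /= (map_inj_uniq Some_inj) c_uniq andbT.
  by apply/mapP => -[].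
- exact: sorted_cone.
- by case=> [w|]; rewrite (perm_mem q_perm) ?inE ?(mem_map Some_inj) ?c_all.
- by [].
- by rewrite last_cat /= map_rcons last_rcons.
Qed.

Lemma traceable_of_add_edge u v : u != v -> ~~ e u v ->
  (bhn e).-1 <= deg e u -> (bhn e).-1 <= deg e v ->
  traceable (add_edge e u v) -> traceable e.
Proof.
move=> uv nuv du dv [c [c_uniq c_sorted c_all]].
have [traceable_e | not_traceable] := classic (traceable e); first by [].
case: (split_add_edge_path c_uniq c_sorted) => [sorted_c | [p1 [a [b [p2 [cE s1 s2 ab]]]]]].
  by exists c.
have [q [q_uniq q_sorted q_all q_head q_last]] := cone_path_of_split c_uniq c_all cE s1 s2.
have q_no_cycle c' : perm_eq c' q -> ~~ cycle (cone e) c'.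
  move=> pc'; apply/negP => cyc; apply: not_traceable.
  by apply: cone_cycle_traceable cyc; [rewrite (perm_uniq pc') | move=> w; rewrite (perm_mem pc')].
have ends : ~~ cone e (head None q) (last None q).
  by rewrite q_head q_last /=; case/orP: ab => /andP [/eqP -> /eqP ->]; rewrite // e_sym.
have [deg_a deg_b] : bhn e <= deg (cone e) (Some a) /\ bhn e <= deg (cone e) (Some b).
  by rewrite !deg_cone; case/orP: ab => /andP [/eqP -> /eqP ->]; lia.
have [s [s_gt0 s_le no_hole]] := bhn_hole_free e.
have t_gt0 : 0 < (bhn e).+1 - s by rewrite subn_gt0 ltnS.
have st : s + ((bhn e).+1 - s) = (bhn e).+1 by rewrite subnKC // leqW.
case/negP: no_hole; apply: has_bhole_cone => //.
move: deg_a deg_b; rewrite /deg -q_head -q_last => deg_a deg_b.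
by apply: (has_bhole_of_path (cone_sym e_sym) (cone_irr e_irr) q_uniq q_sorted q_all
  q_no_cycle ends); rewrite // st ltnS.
Qed.

End Closure.

Theorem traceable_of_degree_sum (V : finType) (e : rel V) :
  symmetric e -> irreflexive e -> connected e ->
  (forall u v, u != v -> ~~ e u v -> 2 * bhn e - 2 <= deg e u + deg e v) ->
  traceable e.
Proof.
have [n] := ubnP #|nonedges e|; elim: n e => // n IH e lt_n e_sym e_irr e_conn e_deg.
have [/existsP [u /existsP [v /and4P [uv nuv du dv]]] | /existsPn low] :=
  boolP [exists u, exists v, [&& u != v, ~~ e u v, (bhn e).-1 <= deg e u & (bhn e).-1 <= deg e v]].
  apply: (traceable_of_add_edge e_sym e_irr uv nuv du dv); apply: IH.
  - by apply: leq_trans (nonedges_add_edge uv nuv) _.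
  - exact: add_edge_sym.
  - exact: add_edge_irr.
  - exact: connected_add_edge.
  move=> a b ab nab; have nab' : ~~ e a b by apply: contra nab => /subrel_add_edge.
  have := e_deg a b ab nab'; have := bhn_subrel (@subrel_add_edge _ e u v).
  by have := deg_add_edge e u v a; have := deg_add_edge e u v b; lia.
apply: (traceable_two_cliques (L := [set z | deg e z < (bhn e).-1])) => // a b.
  rewrite !inE => da db ab; apply/negPn/negP => nab; have := e_deg a b ab nab; lia.
rewrite !inE -!leqNgt => da db ab; apply/negPn/negP => nab.
by have /existsPn /(_ b) := low a; rewrite ab nab da db.
Qed.

Theorem mainTheorem2 (V : finType) (e : rel V)
  (e_sym : symmetric e) (e_irr : irreflexive e)
  (Gconn : connected e)
  (Hsig : le_ext (2 * bhn e - 2) (sigma2 e)) :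
  traceable e.
Proof. exact: traceable_of_degree_sum e_sym e_irr Gconn (proj1 (le_sigma2P e _) Hsig). Qed.
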